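(* Let $A$ be a finite set, $\rho\subseteq A^n$, $(a_1,\dots,a_n)\in A^n\setminus\rho$, and $b_1,\dots,b_n\in A$ with $b_i\neq a_i$ for all $i$, such that $$(\{a_1,b_1\}\times\{a_2,b_2\}\times\dots\times\{a_n,b_n\})\setminus\{(a_1,\dots,a_n)\}\subseteq\rho.$$ Then $\rho$ is a key relation and $(a_1,\dots,a_n)$ is a key tuple for $\rho$.
   Context: A unary vector-function is a tuple $\Psi=(\psi_1,\dots,\psi_n)$ of maps $\psi_i:A\to A$ acting coordinatewise; it preserves $\rho$ if $\Psi(\rho)\subseteq\rho$. $\rho\subseteq A^n$ is a key relation if there is $\beta\in A^n\setminus\rho$ (a key tuple) such that every $\alpha\in A^n\setminus\rho$ is mapped to $\beta$ by some unary vector-function preserving $\rho$. *)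

From mathcomp Require Import all_boot.
Set Implicit Arguments. Unset Strict Implicit. Unset Printing Implicit Defensive.


Definition apply_vf (A : finType) (n : nat) (Psi : 'I_n -> A -> A)
  (x : {ffun 'I_n -> A}) : {ffun 'I_n -> A} := [ffun i => Psi i (x i)].

Definition preserves (A : finType) (n : nat) (Psi : 'I_n -> A -> A)
  (rho : {set {ffun 'I_n -> A}}) : Prop :=
  forall x, x \in rho -> apply_vf Psi x \in rho.

Definition key_tuple (A : finType) (n : nat) (rho : {set {ffun 'I_n -> A}})
  (beta : {ffun 'I_n -> A}) : Prop :=
  beta \notin rho /\
  forall alpha : {ffun 'I_n -> A}, alpha \notin rho ->
    exists Psi : 'I_n -> A -> A, preserves Psi rho /\ apply_vf Psi alpha = beta.

Definition key_relation (A : finType) (n : nat) (rho : {set {ffun 'I_n -> A}}) : Prop :=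
  exists beta, key_tuple rho beta.

From mathcomp Require Import all_boot.

Set Implicit Arguments.
Unset Strict Implicit.
Unset Printing Implicit Defensive.

(* For a non-member alpha, send each coordinate value alpha_i to a_i and every
   other value to b_i.  This maps alpha to a and all of A^n into the box
   {a_1,b_1} x ... x {a_n,b_n}; since b_i <> a_i, only alpha itself reaches a,
   so every member of rho lands in the box minus a, which lies in rho. *)

Section SeparatingVectorFunction.

Variables (A : finType) (n : nat).
Implicit Types (a b alpha x : {ffun 'I_n -> A}) (rho : {set {ffun 'I_n -> A}}).

Definition separating_vf alpha a b : 'I_n -> A -> A :=
  fun i y => if y == alpha i then a i else b i.

Lemma separating_vf_self alpha a b : apply_vf (separating_vf alpha a b) alpha = a.
Proof. by apply/ffunP => i; rewrite ffunE /separating_vf eqxx. Qed.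

Lemma separating_vf_in_box alpha a b x i :
  let y := apply_vf (separating_vf alpha a b) x in (y i == a i) || (y i == b i).
Proof. by rewrite /= ffunE /separating_vf; case: ifP; rewrite eqxx ?orbT. Qed.

Lemma separating_vf_eq_inv alpha a b x :
  (forall i, b i != a i) -> apply_vf (separating_vf alpha a b) x = a -> x = alpha.
Proof.
move=> hb /ffunP ea; apply/ffunP => i; move: (ea i) (hb i).
by rewrite ffunE /separating_vf; case: eqP => // _ ->; rewrite eqxx.
Qed.

Lemma preserves_separating_vf rho alpha a b :
  alpha \notin rho -> (forall i, b i != a i) ->
  (forall x, (forall i, (x i == a i) || (x i == b i)) -> x != a -> x \in rho) ->
  preserves (separating_vf alpha a b) rho.
Proof.
move=> halpha hb hbox x hx; apply: hbox; first exact: separating_vf_in_box.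
apply/eqP => /(separating_vf_eq_inv hb) ex.
by move: halpha; rewrite -ex hx.
Qed.

End SeparatingVectorFunction.

Theorem mainTheorem5 (A : finType) (n : nat) (rho : {set {ffun 'I_n -> A}})
  (a b : {ffun 'I_n -> A})
  (ha : a \notin rho)
  (hb : forall i, b i != a i)
  (hbox : forall x : {ffun 'I_n -> A},
      (forall i, (x i == a i) || (x i == b i)) -> x != a -> x \in rho) :
  key_relation rho /\ key_tuple rho a.
Proof.
have key_a : key_tuple rho a.
  split=> // alpha halpha; exists (separating_vf alpha a b).
  by split; [exact: preserves_separating_vf | exact: separating_vf_self].
by split=> //; exists a.
Qed.
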